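(* Let $e(\tau,s)$ be a complete equation of state, let $s_0$ be fixed, and assume the isentrope $\tau\mapsto e(\tau,s_0)$ is convex. Let $\mathcal A=\{\bm u=(\rho,\bm m,E)\in\mathbb R^{d+2}:\rho>0,\ \rho\,\mathsf e(\bm u)\ge \rho\, e(\rho^{-1},s_0)\}$, where $\mathsf e(\bm u)=E/\rho-\|\bm m\|^2_{\ell^2}/(2\rho^2)$. Let $\mathcal V$ be a finite index set and, for each $i\in\mathcal V$, let $\mathcal I(i)\subset\mathcal V$ be an index set containing $i$. Let $\{\mathsf U_i^n\}_{i\in\mathcal V}\subset\mathcal A$, and suppose there exist $\hat\lambda_{ij}>0$ such that $\overline{\mathsf U}^n_{ij}(\hat\lambda_{ij})\in\mathcal A$ for each $i\in\mathcal V$ and all $j\in\mathcal I(i)$. Define $$\mathsf U_i^{n+1}=\sum_{k\in\mathcal I(i)}\omega^n_{ik}\mathsf U_k^n+\sum_{j\in\mathcal I(i)\setminus\{i\}}\mu^n_{ij}\,\overline{\mathsf U}^n_{ij}(\hat\lambda_{ij}),$$ where $\omega^n_{ik},\mu^n_{ij}\in[0,1]$ and $\sum_{k\in\mathcal I(i)}\omega^n_{ik}+\sum_{j\in\mathcal I(i)\setminus\{i\}}\mu^n_{ij}=1$. Then $\mathsf U_i^{n+1}\in\mathcal A$ for every $i\in\mathcal V$.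
   Context: $\overline{\mathsf U}^n_{ij}(\lambda)$ denotes the auxiliary state $\tfrac12(\mathsf U_i^n+\mathsf U_j^n)-\tfrac1{2\lambda}(\mathbb f(\mathsf U_j^n)-\mathbb f(\mathsf U_i^n))\bm n_{ij}$ for some unit vector $\bm n_{ij}$, where $\mathbb f$ is the Euler flux; only the hypothesis that these states lie in $\mathcal A$ is used. A complete equation of state is a function $e(\tau,s)$ giving specific internal energy in terms of specific volume and specific entropy. *)

From HB Require Import structures.
From mathcomp Require Import all_boot all_order all_algebra.
From mathcomp Require Import reals.
Set Implicit Arguments. Unset Strict Implicit. Unset Printing Implicit Defensive.
Import Order.TTheory GRing.Theory Num.Theory.
Local Open Scope ring_scope.

(* Conserved state u = (rho, m_1, ..., m_d, E) in R^(d+2), as a column vector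
   indexed by 'I_(d.+2): index 0 is rho, indices 1..d are m, index d+1 is E. *)
Section Euler.
Variables (R : realType) (d : nat).

Definition st_rho (u : 'cV[R]_(d.+2)) : R := u (inord 0) ord0.
Definition st_E (u : 'cV[R]_(d.+2)) : R := u (inord d.+1) ord0.
Definition st_m2 (u : 'cV[R]_(d.+2)) : R :=
  \sum_(k < d) (u (inord k.+1) ord0) ^+ 2.

Definition st_eint (u : 'cV[R]_(d.+2)) : R :=
  st_E u / st_rho u - st_m2 u / (2 * st_rho u ^+ 2).

Definition admissible (e : R -> R -> R) (s0 : R) (u : 'cV[R]_(d.+2)) : Prop :=
  0 < st_rho u /\ st_rho u * st_eint u >= st_rho u * e (st_rho u)^-1 s0.

Definition aux_state (f : 'cV[R]_(d.+2) -> 'M[R]_(d.+2, d))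
  (ui uj : 'cV[R]_(d.+2)) (n : 'cV[R]_d) (lam : R) : 'cV[R]_(d.+2) :=
  2^-1 *: (ui + uj) - (2 * lam)^-1 *: ((f uj - f ui) *m n).

Definition unit_vec (n : 'cV[R]_d) : Prop := \sum_(k < d) (n k ord0) ^+ 2 = 1.

End Euler.

Definition isentrope_convex (R : realType) (e : R -> R -> R) (s0 : R) : Prop :=
  forall t1 t2 t : R, 0 < t1 -> 0 < t2 -> 0 <= t <= 1 ->
    e (t * t1 + (1 - t) * t2) s0 <= t * e t1 s0 + (1 - t) * e t2 s0.

(* The admissible set A is convex: in conserved variables, rho e(u) = E - |m|^2/(2 rho)
   and the constraint reads E >= |m|^2/(2 rho) + rho e(1/rho, s0), whose right-hand side
   is jointly convex in (rho, m) -- |m|^2/rho is a quadratic-over-linear function and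
   rho e(1/rho, s0) is the perspective of the convex isentrope.  The updated state is a
   convex combination of states in A (the U_k and the auxiliary states), hence in A. *)
From HB Require Import structures.
From mathcomp Require Import all_boot all_order all_algebra.
From mathcomp Require Import reals.
From mathcomp Require Import ring lra.
Set Implicit Arguments. Unset Strict Implicit. Unset Printing Implicit Defensive.
Import Order.TTheory GRing.Theory Num.Theory.
Local Open Scope ring_scope.

Section ConvexCombination.
Variables (R : realFieldType) (W : lmodType R).

Definition convex_pred (P : W -> Prop) :=
  forall (t : R) x y, 0 <= t <= 1 -> P x -> P y -> P (t *: x + (1 - t) *: y).

Definition cone_pred (P : W -> Prop) (u : W) (w : R) :=
  (w = 0 /\ u = 0) \/ (0 < w /\ P (w^-1 *: u)).

Variable P : W -> Prop.

Lemma cone_pred1 u : cone_pred P u 1 -> P u.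
Proof. by move=> [[/eqP]|[_]]; rewrite ?oner_eq0 // invr1 scale1r. Qed.

Hypothesis convexP : convex_pred P.

Lemma cone_predD u1 w1 u2 w2 :
  cone_pred P u1 w1 -> cone_pred P u2 w2 -> cone_pred P (u1 + u2) (w1 + w2).
Proof.
move=> [[-> ->]|[w1_gt0 Pu1]] [[-> ->]|[w2_gt0 Pu2]].
- by left; rewrite !addr0.
- by right; rewrite !add0r.
- by right; rewrite !addr0.
have w_gt0 : 0 < w1 + w2 by lra.
have w_neq0 := lt0r_neq0 w_gt0; have w1_neq0 := lt0r_neq0 w1_gt0.
have w2_neq0 := lt0r_neq0 w2_gt0.
right; split=> //.
have -> : (w1 + w2)^-1 *: (u1 + u2) =
    (w1 / (w1 + w2)) *: (w1^-1 *: u1) + (1 - w1 / (w1 + w2)) *: (w2^-1 *: u2).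
  rewrite !scalerA scalerDr; congr (_ *: _ + _ *: _); field.
  all: rewrite ?w_neq0 ?w1_neq0 ?w2_neq0 //.
apply: convexP => //.
apply/andP; split; first by rewrite divr_ge0 ?ltW.
by rewrite ler_pdivrMr // mul1r; lra.
Qed.

Lemma cone_pred_sum (I : finType) (A : {set I}) (w : I -> R) (x : I -> W) :
  (forall k, k \in A -> 0 <= w k) -> (forall k, k \in A -> P (x k)) ->
  cone_pred P (\sum_(k in A) w k *: x k) (\sum_(k in A) w k).
Proof.
move=> w_ge0 Px.
apply: (big_ind2 (cone_pred P)); first by left.
  by move=> *; apply: cone_predD.
move=> k kA; have [->|wk_gt0] := eqVneq (w k) 0.
  by left; rewrite scale0r.
have {}wk_gt0 : 0 < w k by rewrite lt0r wk_gt0 w_ge0.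
right; split=> //.
by rewrite scalerA mulVf ?gt_eqF // scale1r; apply: Px.
Qed.

End ConvexCombination.

Section RealConvexity.
Variable R : realFieldType.

Lemma convex_comb_gt0 {t r s : R} :
  0 <= t <= 1 -> 0 < r -> 0 < s -> 0 < t * r + (1 - t) * s.
Proof.
move=> /andP[t_ge0 t_le1] r_gt0 s_gt0.
have [t_gt0|t_le0] := ltrP 0 t.
  have : 0 < t * r by rewrite mulr_gt0.
  have : 0 <= (1 - t) * s by rewrite mulr_ge0 ?subr_ge0 // ltW.
  lra.
have -> : t = 0 by lra.
lra.
Qed.

Lemma sqr_div_convex (t a b r s : R) : 0 <= t <= 1 -> 0 < r -> 0 < s ->
  (t * a + (1 - t) * b) ^+ 2 / (t * r + (1 - t) * s)
    <= t * (a ^+ 2 / r) + (1 - t) * (b ^+ 2 / s).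
Proof.
move=> t01 r_gt0 s_gt0; have D_gt0 := convex_comb_gt0 t01 r_gt0 s_gt0.
have /andP[t_ge0 t_le1] := t01.
rewrite -subr_ge0.
have -> : t * (a ^+ 2 / r) + (1 - t) * (b ^+ 2 / s)
            - (t * a + (1 - t) * b) ^+ 2 / (t * r + (1 - t) * s)
          = t * (1 - t) * (a * s - b * r) ^+ 2 / (r * s * (t * r + (1 - t) * s)).
  by field; rewrite !lt0r_neq0.
apply: divr_ge0; first by rewrite mulr_ge0 ?sqr_ge0 // mulr_ge0 // subr_ge0.
by rewrite !mulr_ge0 // ltW.
Qed.

End RealConvexity.

Section Admissible.
Variables (R : realType) (d : nat) (e : R -> R -> R) (s0 : R).

Lemma isentrope_perspective_convex {t r s : R} : isentrope_convex e s0 ->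
  0 <= t <= 1 -> 0 < r -> 0 < s ->
  (t * r + (1 - t) * s) * e (t * r + (1 - t) * s)^-1 s0
    <= t * (r * e r^-1 s0) + (1 - t) * (s * e s^-1 s0).
Proof.
move=> convex_e t01 r_gt0 s_gt0; set D := t * r + (1 - t) * s.
have D_gt0 : 0 < D := convex_comb_gt0 t01 r_gt0 s_gt0.
have /andP[t_ge0 t_le1] := t01.
(* 1/D is the convex combination of 1/r and 1/s with weight p *)
pose p := t * r / D.
have p01 : 0 <= p <= 1.
  apply/andP; split; first by rewrite /p divr_ge0 ?mulr_ge0 // ltW.
  rewrite /p ler_pdivrMr // mul1r.
  have : 0 <= (1 - t) * s by rewrite mulr_ge0 ?subr_ge0 // ltW.
  rewrite /D; lra.
have invD : D^-1 = p * r^-1 + (1 - p) * s^-1.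
  by rewrite /p /D; field; rewrite !lt0r_neq0.
have := convex_e r^-1 s^-1 p; rewrite !invr_gt0 r_gt0 s_gt0 -invD => /(_ isT isT p01).
move=> /(ler_wpM2l (ltW D_gt0)).
suff -> : D * (p * e r^-1 s0 + (1 - p) * e s^-1 s0)
            = t * (r * e r^-1 s0) + (1 - t) * (s * e s^-1 s0) by [].
by rewrite /p /D; field; rewrite lt0r_neq0.
Qed.

Lemma st_rho_eint (u : 'cV[R]_(d.+2)) : 0 < st_rho u ->
  st_rho u * st_eint u = st_E u - (st_m2 u / st_rho u) / 2.
Proof. by move=> rho_gt0; rewrite /st_eint; field; rewrite lt0r_neq0. Qed.

Lemma st_m2_div_rho_convex {t : R} {x y : 'cV[R]_(d.+2)} :
  0 <= t <= 1 -> 0 < st_rho x -> 0 < st_rho y ->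
  st_m2 (t *: x + (1 - t) *: y) / (t * st_rho x + (1 - t) * st_rho y)
    <= t * (st_m2 x / st_rho x) + (1 - t) * (st_m2 y / st_rho y).
Proof.
move=> t01 rx ry.
rewrite /st_m2 !mulr_suml !mulr_sumr -big_split /=.
by apply: ler_sum => k _; rewrite !mxE; apply: sqr_div_convex.
Qed.

Lemma admissible_convex : isentrope_convex e s0 -> convex_pred (admissible (d := d) e s0).
Proof.
move=> convex_e t x y t01 [rx_gt0 Ax] [ry_gt0 Ay].
rewrite st_rho_eint // in Ax; rewrite st_rho_eint // in Ay.
have rho_z : st_rho (t *: x + (1 - t) *: y) = t * st_rho x + (1 - t) * st_rho y.
  by rewrite /st_rho !mxE.
have E_z : st_E (t *: x + (1 - t) *: y) = t * st_E x + (1 - t) * st_E y.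
  by rewrite /st_E !mxE.
have rz_gt0 := convex_comb_gt0 t01 rx_gt0 ry_gt0.
split; first by rewrite rho_z.
rewrite st_rho_eint rho_z ?E_z //.
have := st_m2_div_rho_convex t01 rx_gt0 ry_gt0.
have := isentrope_perspective_convex convex_e t01 rx_gt0 ry_gt0.
have /andP[t_ge0 t_le1] := t01.
have := ler_wpM2l t_ge0 Ax; have := ler_wpM2l (_ : 0 <= 1 - t) Ay.
lra.
Qed.

End Admissible.

Theorem proposition4p1 (R : realType) (d : nat) (e : R -> R -> R) (s0 : R)
  (f : 'cV[R]_(d.+2) -> 'M[R]_(d.+2, d))
  (V : finType) (I : V -> {set V}) (U : V -> 'cV[R]_(d.+2))
  (n : V -> V -> 'cV[R]_d) (lam omega mu : V -> V -> R) :
  isentrope_convex e s0 ->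
  (forall i, i \in I i) ->
  (forall i, admissible e s0 (U i)) ->
  (forall i j, j \in I i -> unit_vec (n i j)) ->
  (forall i j, j \in I i -> 0 < lam i j) ->
  (forall i j, j \in I i -> admissible e s0 (aux_state f (U i) (U j) (n i j) (lam i j))) ->
  (forall i k, k \in I i -> 0 <= omega i k <= 1) ->
  (forall i j, j \in I i :\ i -> 0 <= mu i j <= 1) ->
  (forall i, \sum_(k in I i) omega i k + \sum_(j in I i :\ i) mu i j = 1) ->
  forall i, admissible e s0
    (\sum_(k in I i) omega i k *: U k
     + \sum_(j in I i :\ i) mu i j *: aux_state f (U i) (U j) (n i j) (lam i j)).
Proof.
move=> convex_e _ AU _ _ Aaux omega01 mu01 weights1 i.
have convexA := admissible_convex (d := d) convex_e.
apply: cone_pred1; rewrite -(weights1 i).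
apply: (cone_predD convexA); apply: (cone_pred_sum convexA).
- by move=> k /omega01 /andP[].
- by move=> k _; apply: AU.
- by move=> j /mu01 /andP[].
- by move=> j /setD1P[_ /Aaux].
Qed.
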